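(* Assume $n^{2/3}$ is an integer. Consider Algorithm ProxSVRG (described in the context) with $b=n^{2/3}$, $\eta=1/(3L)$, $m=\lfloor n^{1/3}\rfloor$, and $T$ a multiple of $m$. Then the output $x_a$ satisfies $$\mathbb E\big[\|\mathcal G_\eta(x_a)\|^2\big]\le \frac{18L\,(F(x^0)-F(x^* ))}{T},$$ where $x^*$ is an optimal solution of $\min_x F(x)$.
   Context: Setting: Let $n,d\ge 1$ be integers and $[n]=\{1,\dots,n\}$. Let $f_1,\dots,f_n:\mathbb R^d\to\mathbb R$ be differentiable (possibly nonconvex) functions, each $L$-smooth for some $L>0$, i.e. $\|\nabla f_i(x)-\nabla f_i(y)\|\le L\|x-y\|$ for all $x,y\in\mathbb R^d$ and $i\in[n]$. Let $f=\frac1n\sum_{i=1}^n f_i$. Let $h:\mathbb R^d\to\mathbb R\cup\{+\infty\}$ be proper, lower semicontinuous and convex, with closed domain. Let $F=f+h$, and let $x^*$ be a global minimizer of $F$ on $\mathbb R^d$ (assumed to exist). For $\eta>0$, $\mathrm{prox}_{\eta h}(x):=\arg\min_{y\in\mathbb R^d}\big(h(y)+\frac1{2\eta}\|y-x\|^2\big)$, and the gradient mapping is $\mathcal G_\eta(x):=\frac1\eta\big[x-\mathrm{prox}_{\eta h}(x-\eta\nabla f(x))\big]$. Algorithm ProxSVRG$(x^0,T,m,b,\eta)$: Given $x^0\in\mathbb R^d$, positive integers $T,m,b$ and $\eta>0$, let $S=\lceil T/m\rceil$ and set $\tilde x^0=x^0_m=x^0$. For $s=0,\dots,S-1$: set $x^{s+1}_0=x^s_m$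 and $g^{s+1}=\frac1n\sum_{i=1}^n\nabla f_i(\tilde x^s)$; for $t=0,\dots,m-1$: draw a multiset $I_t$ of $b$ indices, each drawn independently and uniformly at random from $[n]$ (with replacement, independently of all previous draws), set $v^{s+1}_t=\frac1b\sum_{i\in I_t}\big(\nabla f_i(x^{s+1}_t)-\nabla f_i(\tilde x^s)\big)+g^{s+1}$ and $x^{s+1}_{t+1}=\mathrm{prox}_{\eta h}(x^{s+1}_t-\eta v^{s+1}_t)$; after the inner loop set $\tilde x^{s+1}=x^{s+1}_m$. The output $x_a$ is chosen uniformly at random from $\{x^{s+1}_t: 0\le t\le m-1,\ 0\le s\le S-1\}$. Expectations are over all randomness of the algorithm. *)

From Stdlib Require Import Reals ClassicalEpsilon.
From mathcomp Require Import all_boot.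
Set Implicit Arguments. Unset Strict Implicit. Unset Printing Implicit Defensive.

Open Scope R_scope.

Notation "\rsum_ ( i < n ) F" := (\big[Rplus/R0]_(i < n) F)
  (at level 41, F at level 41, i, n at level 50).
Notation "\rsum_ ( i : T ) F" := (\big[Rplus/R0]_(i : T) F)
  (at level 41, F at level 41, i at level 50).

Definition vec (d : nat) := 'I_d -> R.
Definition vadd {d} (x y : vec d) : vec d := fun k => x k + y k.
Definition vsub {d} (x y : vec d) : vec d := fun k => x k - y k.
Definition vscale {d} (c : R) (x : vec d) : vec d := fun k => c * x k.
Definition dot {d} (x y : vec d) : R := \rsum_(k < d) (x k * y k).
Definition norm2 {d} (x : vec d) : R := dot x x.
Definition norm {d} (x : vec d) : R := sqrt (norm2 x).

Definition has_gradient {d} (g : vec d -> R) (gr : vec d -> vec d) : Prop :=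
  forall x eps, 0 < eps -> exists delta, 0 < delta /\
    forall hv, norm hv < delta ->
      Rabs (g (vadd x hv) - g x - dot (gr x) hv) <= eps * norm hv.

Definition smooth {d} (L : R) (gr : vec d -> vec d) : Prop :=
  forall x y, norm (vsub (gr x) (gr y)) <= L * norm (vsub x y).

(* Extended reals R ∪ {+oo}: None = +oo. *)
Definition ext := option R.
Definition ext_le (a b : ext) : Prop :=
  match a, b with
  | _, None => True
  | None, Some _ => False
  | Some x, Some y => x <= y
  end.
Definition ext_add_r (a : ext) (r : R) : ext :=
  match a with None => None | Some x => Some (x + r) end.
Definition lt_ext (a : R) (o : ext) : Prop :=
  match o with None => True | Some v => a < v end.

Definition proper_fn {d} (h : vec d -> ext) : Prop := exists x, h x <> None.
Definition lsc {d} (h : vec d -> ext) : Prop :=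
  forall x a, lt_ext a (h x) -> exists delta, 0 < delta /\
    forall y, norm (vsub y x) < delta -> lt_ext a (h y).
Definition convex_ext {d} (h : vec d -> ext) : Prop :=
  forall x y hx hy t, h x = Some hx -> h y = Some hy -> 0 <= t <= 1 ->
    exists v, h (vadd (vscale t x) (vscale (1 - t) y)) = Some v /\
              v <= t * hx + (1 - t) * hy.
Definition closed_dom {d} (h : vec d -> ext) : Prop :=
  forall x, (forall eps, 0 < eps -> exists y, h y <> None /\ norm (vsub y x) < eps) ->
    h x <> None.

Definition is_prox {d} (h : vec d -> ext) (eta : R) (x y : vec d) : Prop :=
  forall z, ext_le (ext_add_r (h y) (norm2 (vsub y x) / (2 * eta)))
                   (ext_add_r (h z) (norm2 (vsub z x) / (2 * eta))).
Definition prox {d} (h : vec d -> ext) (eta : R) (x : vec d) : vec d :=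
  epsilon (inhabits (fun _ : 'I_d => 0)) (is_prox h eta x).

(* f = (1/n) sum_i f_i (components indexed 0..n-1) and its gradient. *)
Definition favg {d} (n : nat) (fs : nat -> vec d -> R) (x : vec d) : R :=
  / INR n * \rsum_(i < n) fs i x.
Definition gavg {d} (n : nat) (gs : nat -> vec d -> vec d) (x : vec d) : vec d :=
  fun k => / INR n * \rsum_(i < n) gs i x k.

Definition Fobj {d} (n : nat) (fs : nat -> vec d -> R) (h : vec d -> ext) (x : vec d) : ext :=
  ext_add_r (h x) (favg n fs x).

Definition grad_map {d} (n : nat) (gs : nat -> vec d -> vec d) (h : vec d -> ext)
  (eta : R) (x : vec d) : vec d :=
  vscale (/ eta) (vsub x (prox h eta (vsub x (vscale eta (gavg n gs x))))).

(* ---------------- ProxSVRG ----------------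
   idx s t j = the j-th index (0-based, in [0,n)) of the minibatch I_t in epoch s. *)
Definition vr_grad {d} (gs : nat -> vec d -> vec d) (b : nat) (It : nat -> nat)
  (x snap g : vec d) : vec d :=
  fun k => (/ INR b * (\rsum_(j < b) (gs (It j) x k - gs (It j) snap k))) + g k.

(* Inner loop of epoch s: x^{s+1}_t, starting from x^{s+1}_0 = snap. *)
Fixpoint inner_iter {d} (n : nat) (gs : nat -> vec d -> vec d) (h : vec d -> ext)
  (eta : R) (b : nat) (It : nat -> nat -> nat) (snap : vec d) (t : nat) : vec d :=
  match t with
  | O => snap
  | S t' =>
      let x := inner_iter n gs h eta b It snap t' in
      prox h eta (vsub x (vscale eta (vr_grad gs b (It t') x snap (gavg n gs snap))))
  end.

(* Snapshots tilde x^s (tilde x^0 = x^0, tilde x^{s+1} = x^{s+1}_m);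
   note x^{s+1}_0 = x^s_m = tilde x^s. *)
Fixpoint snapshot {d} (n : nat) (gs : nat -> vec d -> vec d) (h : vec d -> ext)
  (eta : R) (b m : nat) (idx : nat -> nat -> nat -> nat) (x0 : vec d) (s : nat) : vec d :=
  match s with
  | O => x0
  | S s' => inner_iter n gs h eta b (idx s') (snapshot n gs h eta b m idx x0 s') m
  end.

Definition iterate {d} (n : nat) (gs : nat -> vec d -> vec d) (h : vec d -> ext)
  (eta : R) (b m : nat) (idx : nat -> nat -> nat -> nat) (x0 : vec d) (s t : nat) : vec d :=
  inner_iter n gs h eta b (idx s) (snapshot n gs h eta b m idx x0 s) t.

(* Sample space of all minibatch draws: for each epoch s < S, inner step t < m,
   and slot j < b, an index in [n]; each outcome has probability 1/#|Omega|
   (i.i.d. uniform draws with replacement). *)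
Definition Omega (n S m b : nat) : finType :=
  {ffun 'I_S -> {ffun 'I_m -> {ffun 'I_b -> 'I_n}}}.

Definition draws {n S m b : nat} (w : Omega n S m b) : nat -> nat -> nat -> nat :=
  fun s t j =>
    match (insub s : option 'I_S), (insub t : option 'I_m), (insub j : option 'I_b) with
    | Some s', Some t', Some j' => nat_of_ord (w s' t' j')
    | _, _, _ => 0%N
    end.

(* E ||G_eta(x_a)||^2, x_a uniform over {x^{s+1}_t : t < m, s < S},
   independent of the draws. *)
Definition expected_sq_grad_map {d} (n : nat) (gs : nat -> vec d -> vec d)
  (h : vec d -> ext) (eta : R) (x0 : vec d) (S m b : nat) : R :=
  / INR #|{: Omega n S m b}| *
  \rsum_(w : Omega n S m b)
    (/ INR (S * m) *
     \rsum_(s < S) \rsum_(t < m)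
        norm2 (grad_map n gs h eta (iterate n gs h eta b m (draws w) x0 s t))).

(* Within an epoch with snapshot x~, consider the potential
     Phi_t = F(x_t) + c_t |x_t - x~|^2,   c_m = 0,   c_t = c_(t+1) (1 + 1/m) + L/(6b).
   Comparing the stochastic prox step x_(t+1) with the full-gradient step xb_(t+1)
   (three-point property of the prox and the two-sided Taylor bound of L-smooth f),
   and bounding the minibatch variance by (L^2/b) |x_t - x~|^2, gives
     E Phi_(t+1) <= Phi_t - (L/2) |xb_(t+1) - x_t|^2 = Phi_t - |G_eta(x_t)|^2 / (18 L)
   as long as c_(t+1) (1 + m) <= L, which holds because c_t <= L m / (3 b) and b >= m^2.
   As Phi_0 and Phi_m are F at consecutive snapshots, summing over all steps telescopes
   to sum E |G_eta|^2 <= 18 L (F(x^0) - F(x* )).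
   Expectations are averages over all draws; the expectation over a single minibatch is
   isolated by resampling that component of the draw.  The prox exists because h plus a
   strongly convex quadratic attains its minimum: minimizing sequences are Cauchy. *)

From Stdlib Require Import Reals.
From mathcomp Require Import all_boot.
Open Scope R_scope.
From Stdlib Require Import Lra Lia Psatz Classical ClassicalEpsilon FunctionalExtensionality.
From HB Require Import structures.
Set Warnings "-redundant-canonical-projection".
Set Implicit Arguments. Unset Strict Implicit. Unset Printing Implicit Defensive.

(** * Finite sums of reals *)

HB.instance Definition _ := Monoid.isComLaw.Build R R0 Rplus
  (fun x y z => esym (Rplus_assoc x y z)) Rplus_comm Rplus_0_l.

Section RealSums.
Variable I : finType.
Implicit Types F G : I -> R.

Lemma rsumD F G : \rsum_(i : I) (F i + G i) = \rsum_(i : I) F i + \rsum_(i : I) G i.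
Proof. exact: big_split. Qed.

Lemma rsumZ c F : \rsum_(i : I) (c * F i) = c * \rsum_(i : I) F i.
Proof. by elim/big_rec2: _ => [|i y1 y2 _ ->]; lra. Qed.

Lemma rsumZr c F : \rsum_(i : I) (F i * c) = (\rsum_(i : I) F i) * c.
Proof. by rewrite Rmult_comm -rsumZ; apply: eq_bigr => i _; ring. Qed.

Lemma rsumB F G : \rsum_(i : I) (F i - G i) = \rsum_(i : I) F i - \rsum_(i : I) G i.
Proof. by elim/big_rec3: _ => [|i y1 y2 y3 _ ->]; lra. Qed.

Lemma ler_rsum F G : (forall i, F i <= G i) -> \rsum_(i : I) F i <= \rsum_(i : I) G i.
Proof. by move=> FG; elim/big_rec2: _ => [|i y1 y2 _]; [lra | have := FG i; lra]. Qed.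

Lemma rsum_ge0 F : (forall i, 0 <= F i) -> 0 <= \rsum_(i : I) F i.
Proof. by move=> F0; elim/big_rec: _ => [|i y _]; [lra | have := F0 i; lra]. Qed.

Lemma rsum_const c : \rsum_(i : I) c = INR #|I| * c.
Proof.
rewrite big_const -[#|xpredT|]/#|I|.
by elim: #|I| => [|k IH]; [rewrite /=; lra | rewrite S_INR /= IH; lra].
Qed.

Lemma Rabs_rsum_le F : Rabs (\rsum_(i : I) F i) <= \rsum_(i : I) Rabs (F i).
Proof.
elim/big_rec2: _ => [|i y1 y2 _ Hy]; first by rewrite Rabs_R0; lra.
by have := Rabs_triang (F i) y2; lra.
Qed.

Lemma rsum_ge_term F i0 : (forall i, 0 <= F i) -> F i0 <= \rsum_(i : I) F i.
Proof.
move=> F0; rewrite (bigD1 i0) //=.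
have : 0 <= \big[Rplus/R0]_(i | i != i0) F i.
  by elim/big_rec: _ => [|i y _]; [lra | have := F0 i; lra].
lra.
Qed.

End RealSums.

Lemma exchange_rsum (I J : finType) (F : I -> J -> R) :
  \rsum_(i : I) \rsum_(j : J) F i j = \rsum_(j : J) \rsum_(i : I) F i j.
Proof. exact: exchange_big. Qed.

Lemma rsum_telescope (a : nat -> R) k : \rsum_(t < k) (a t - a t.+1) = a 0%N - a k.
Proof. by elim: k => [|k IH]; rewrite ?big_ord0 ?big_ord_recr /= ?IH; ring. Qed.

(** * Euclidean vectors *)

Ltac coordinatewise :=
  rewrite /norm2 /dot -?rsumZ -?rsumB -?rsumD -?rsumB -?rsumD; apply: eq_bigr => k _;
  rewrite /vsub /vadd /vscale; ring.

Section Vectors.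
Variable d : nat.
Implicit Types x y z u v : vec d.

Lemma norm2_ge0 x : 0 <= norm2 x.
Proof. by apply: rsum_ge0 => k; nra. Qed.

Lemma norm_ge0 x : 0 <= norm x.
Proof. exact: sqrt_pos. Qed.

Lemma norm_sqr x : norm x * norm x = norm2 x.
Proof. exact/sqrt_sqrt/norm2_ge0. Qed.

Lemma coord_sqr_le_norm2 x k : x k * x k <= norm2 x.
Proof. by rewrite /norm2 /dot; apply: (@rsum_ge_term _ (fun k => x k * x k)) => i; nra. Qed.

Lemma norm2_scale c x : norm2 (vscale c x) = c * c * norm2 x.
Proof. by coordinatewise. Qed.

Lemma norm_scale c x : norm (vscale c x) = Rabs c * norm x.
Proof.
rewrite /norm norm2_scale sqrt_mult; [|nra | exact: norm2_ge0].
by rewrite -(sqrt_Rsqr_abs c).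
Qed.

Lemma norm_lt_of_norm2 x e : 0 < e -> norm2 x < e * e -> norm x < e.
Proof. by move=> e0; have := norm_ge0 x; have := norm_sqr x; nra. Qed.

Lemma norm2_le_of_norm x e : 0 <= e -> norm x <= e -> norm2 x <= e * e.
Proof. by move=> e0; have := norm_ge0 x; have := norm_sqr x; nra. Qed.

Lemma norm2_subC x y : norm2 (vsub x y) = norm2 (vsub y x).
Proof. by coordinatewise. Qed.

Lemma norm2_subvv x : norm2 (vsub x x) = 0.
Proof. by rewrite -(Rmult_0_r (INR #|'I_d|)) -rsum_const; coordinatewise. Qed.

Lemma dot_subvv x y : dot x (vsub y y) = 0.
Proof. by rewrite -(Rmult_0_r (INR #|'I_d|)) -rsum_const; coordinatewise. Qed.

Lemma dot_scaler c x y : dot x (vscale c y) = c * dot x y.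
Proof. by coordinatewise. Qed.

Lemma dot_scalel c x y : dot (vscale c x) y = c * dot x y.
Proof. by coordinatewise. Qed.

Lemma dot_subl x y z : dot (vsub x y) z = dot x z - dot y z.
Proof. by coordinatewise. Qed.

Lemma dot_young x y a : 0 < a -> dot x y <= a * norm2 x + / (4 * a) * norm2 y.
Proof.
move=> a0; rewrite /norm2 /dot -!rsumZ -rsumD; apply: ler_rsum => k.
have E : a * (x k * x k) + / (4 * a) * (y k * y k) - x k * y k
   = / (4 * a) * ((2 * a * x k - y k) * (2 * a * x k - y k)) by field; lra.
have : 0 <= / (4 * a) * ((2 * a * x k - y k) * (2 * a * x k - y k)).
  apply: Rmult_le_pos; first by apply/Rlt_le/Rinv_0_lt_compat; lra.
  exact: Rle_0_sqr.
lra.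
Qed.

Lemma dot_le_of_norm2 x y c : 0 < c -> norm2 x <= c * c * norm2 y -> dot x y <= c * norm2 y.
Proof.
move=> c0 xy; have := dot_young x y (a := / (2 * c)) ltac:(apply: Rinv_0_lt_compat; lra).
have -> : / (4 * / (2 * c)) = c / 2 by field; lra.
have : / (2 * c) * norm2 x <= c / 2 * norm2 y.
  apply: (Rmult_le_reg_l (2 * c)); first lra.
  by rewrite -Rmult_assoc Rinv_r; [nra | lra].
lra.
Qed.

Lemma norm2_sub_young x y z e : 0 < e ->
  norm2 (vsub x y) <= (1 + e) * norm2 (vsub x z) + (1 + / e) * norm2 (vsub z y).
Proof.
move=> e0; rewrite /norm2 /dot -!rsumZ -rsumD; apply: ler_rsum => k; rewrite /vsub.
set p := x k - z k; set q := z k - y k.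
have -> : x k - y k = p + q by rewrite /p /q; ring.
have E : (1 + e) * (p * p) + (1 + / e) * (q * q) - (p + q) * (p + q)
  = / e * ((e * p - q) * (e * p - q)) by field; lra.
have : 0 <= / e * ((e * p - q) * (e * p - q)).
  apply: Rmult_le_pos; first by apply/Rlt_le/Rinv_0_lt_compat; lra.
  exact: Rle_0_sqr.
lra.
Qed.

Lemma norm2_convex_comb t x y u :
  norm2 (vsub (vadd (vscale t x) (vscale (1 - t) y)) u)
  = t * norm2 (vsub x u) + (1 - t) * norm2 (vsub y u) - t * (1 - t) * norm2 (vsub x y).
Proof. by coordinatewise. Qed.

Lemma norm2_sub_shift x y z c v :
  norm2 (vsub z (vsub x (vscale c v))) - norm2 (vsub y (vsub x (vscale c v)))
  = norm2 (vsub z x) - norm2 (vsub y x) + 2 * c * dot (vsub z y) v.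
Proof. by coordinatewise. Qed.

End Vectors.

(** * L-smooth functions *)

Section SmoothTaylor.
Variables (d : nat) (L : R) (f : vec d -> R) (g : vec d -> vec d).
Hypothesis L0 : 0 < L.
Hypothesis grad_f : has_gradient f g.
Hypothesis smooth_g : smooth L g.

Lemma smooth_norm2 x y : norm2 (vsub (g x) (g y)) <= L * L * norm2 (vsub x y).
Proof.
have n0 : 0 <= L * norm (vsub x y) by have := norm_ge0 (vsub x y); nra.
by have := norm2_le_of_norm n0 (smooth_g x y); rewrite -(norm_sqr (vsub x y)); lra.
Qed.

Lemma has_gradient_line x u t :
  derivable_pt_lim (fun t => f (vadd x (vscale t u))) t (dot (g (vadd x (vscale t u))) u).
Proof.
move=> e e0; set z := vadd x (vscale t u); have nu0 := norm_ge0 u.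
have e'0 : 0 < e / (2 * (norm u + 1)) by apply: Rdiv_lt_0_compat; lra.
have [del [del0 Hdel]] := grad_f z e'0.
have del'0 : 0 < del / (norm u + 1) by apply: Rdiv_lt_0_compat; lra.
exists (mkposreal _ del'0) => s s0 /= Hs.
have s0' : 0 < Rabs s by apply: Rabs_pos_lt.
have Hsu : norm (vscale s u) < del.
  have := Rmult_lt_compat_r (norm u + 1) _ _ ltac:(lra) Hs.
  rewrite norm_scale /Rdiv Rmult_assoc Rinv_l; lra.
have := Hdel _ Hsu; rewrite dot_scaler norm_scale.
have -> : vadd z (vscale s u) = vadd x (vscale (t + s) u).
  by apply: functional_extensionality => k; rewrite /z /vadd /vscale; ring.
set D := f _ - f z => HD.
have -> : D / s - dot (g z) u = (D - s * dot (g z) u) / s by field.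
rewrite /Rdiv Rabs_mult Rabs_inv; apply: (Rmult_lt_reg_r (Rabs s)) => //.
rewrite Rmult_assoc Rinv_l; last lra.
have : e / (2 * (norm u + 1)) * norm u < e.
  apply: (Rmult_lt_reg_r (2 * (norm u + 1))); first lra.
  have -> : e / (2 * (norm u + 1)) * norm u * (2 * (norm u + 1)) = e * norm u by field; lra.
  nra.
nra.
Qed.

Lemma smooth_upper_bound x y :
  f y - f x - dot (g x) (vsub y x) <= L / 2 * norm2 (vsub y x).
Proof.
set u := vsub y x; set N := norm2 u; set D0 := dot (g x) u.
pose psi t := f (vadd x (vscale t u)) - D0 * t - L / 2 * N * (t * t).
pose psi' t := dot (g (vadd x (vscale t u))) u - D0 - L * N * t.
have psi_deriv : forall c, 0 <= c <= 1 -> derivable_pt_lim psi c (psi' c).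
  move=> c _.
  have -> : psi' c = dot (g (vadd x (vscale c u))) u - D0 * 1 - L / 2 * N * (1 * id c + id c * 1).
    by rewrite /psi' /id; field.
  have := derivable_pt_lim_minus _ _ _ _ _
    (derivable_pt_lim_minus _ _ _ _ _ (has_gradient_line x u c)
      (derivable_pt_lim_scal _ D0 _ _ (derivable_pt_lim_id c)))
    (derivable_pt_lim_scal _ (L / 2 * N) _ _
      (derivable_pt_lim_mult _ _ _ _ _ (derivable_pt_lim_id c) (derivable_pt_lim_id c))).
  by apply: derivable_pt_lim_ext => t; rewrite /psi /minus_fct /mult_real_fct /mult_fct /id.
have [c [psi_mvt c01]] := MVT_cor2 psi psi' 0 1 ltac:(lra) psi_deriv.
have psi'_le0 : psi' c <= 0.
  rewrite /psi' /D0 -dot_subl.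
  suff : dot (vsub (g (vadd x (vscale c u))) (g x)) u <= L * c * N by lra.
  apply: dot_le_of_norm2; first nra.
  apply: (Rle_trans _ _ _ (smooth_norm2 _ _)); apply: Req_le.
  have -> : vsub (vadd x (vscale c u)) x = vscale c u.
    by apply: functional_extensionality => k; rewrite /vsub /vadd /vscale; ring.
  by rewrite norm2_scale; ring.
have xu0 : vadd x (vscale 0 u) = x.
  by apply: functional_extensionality => k; rewrite /vadd /vscale; ring.
have xu1 : vadd x (vscale 1 u) = y.
  by apply: functional_extensionality => k; rewrite /vadd /vscale /u /vsub; ring.
move: psi_mvt; rewrite /psi xu0 xu1 -/N; nra.
Qed.

End SmoothTaylor.

Lemma has_gradient_opp d (f : vec d -> R) g :
  has_gradient f g -> has_gradient (fun x => - f x) (fun x => vscale (-1) (g x)).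
Proof.
move=> grad_f x e e0; have [del [del0 H]] := grad_f x e e0.
exists del; split=> // v /H Hv /=; rewrite dot_scalel -Rabs_Ropp.
by apply: Rle_trans Hv; right; f_equal; ring.
Qed.

Lemma smooth_opp d L (g : vec d -> vec d) :
  smooth L g -> smooth L (fun x => vscale (-1) (g x)).
Proof.
move=> smooth_g x y.
have -> : vsub (vscale (-1) (g x)) (vscale (-1) (g y)) = vscale (-1) (vsub (g x) (g y)).
  by apply: functional_extensionality => k; rewrite /vsub /vscale; ring.
by rewrite norm_scale Rabs_Ropp Rabs_R1 Rmult_1_l.
Qed.

Lemma smooth_taylor d L (f : vec d -> R) g x y : 0 < L -> has_gradient f g -> smooth L g ->
  Rabs (f y - f x - dot (g x) (vsub y x)) <= L / 2 * norm2 (vsub y x).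
Proof.
move=> L0 grad_f smooth_g; apply: Rabs_le; split; last exact: smooth_upper_bound.
have := smooth_upper_bound L0 (has_gradient_opp grad_f) (smooth_opp smooth_g) x y.
by rewrite dot_scalel; lra.
Qed.

Lemma dot_gavg d n (gs : nat -> vec d -> vec d) x v :
  dot (gavg n gs x) v = / INR n * \rsum_(i < n) dot (gs i x) v.
Proof.
rewrite /dot /gavg; transitivity (/ INR n * \rsum_(k < d) \rsum_(i < n) (gs i x k * v k)).
  by rewrite -rsumZ; apply: eq_bigr => k _; rewrite Rmult_assoc rsumZr.
by rewrite exchange_rsum.
Qed.

Lemma favg_taylor d n L (fs : nat -> vec d -> R) gs x y : (0 < n)%N -> 0 < L ->
  (forall i, (i < n)%N -> has_gradient (fs i) (gs i)) ->
  (forall i, (i < n)%N -> smooth L (gs i)) ->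
  Rabs (favg n fs y - favg n fs x - dot (gavg n gs x) (vsub y x)) <= L / 2 * norm2 (vsub y x).
Proof.
move=> n0 L0 grad_fs smooth_gs; have n0' : 0 < INR n by apply/lt_0_INR/ltP.
rewrite /favg dot_gavg -!Rmult_minus_distr_l -!rsumB Rabs_mult Rabs_pos_eq; last first.
  exact/Rlt_le/Rinv_0_lt_compat.
apply: (Rle_trans _ (/ INR n * \rsum_(i < n) (L / 2 * norm2 (vsub y x)))); last first.
  by rewrite rsum_const card_ord; right; field; lra.
apply: Rmult_le_compat_l; first exact/Rlt_le/Rinv_0_lt_compat.
apply: Rle_trans (Rabs_rsum_le _) _; apply: ler_rsum => i.
exact: smooth_taylor L0 (grad_fs i (ltn_ord i)) (smooth_gs i (ltn_ord i)).
Qed.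

(** * Existence of the proximal point *)

Lemma inv_succ_eventually_lt e : 0 < e ->
  exists N : nat, forall k, (N <= k)%coq_nat -> / (INR k + 1) < e.
Proof.
move=> e0; have [N [HN N0]] := archimed_cor1 e e0; exists N => k Nk.
apply: Rle_lt_trans HN; apply: Rinv_le_contravar; first exact: lt_0_INR.
by have := le_INR _ _ Nk; lra.
Qed.

Lemma CV_const c : Un_cv (fun _ => c) c.
Proof. by move=> e e0; exists 0%nat => k _; rewrite /Rdist Rminus_diag Rabs_R0. Qed.

Lemma CV_rsum (I : finType) (F : I -> nat -> R) (l : I -> R) :
  (forall i, Un_cv (F i) (l i)) -> Un_cv (fun k => \rsum_(i : I) F i k) (\rsum_(i : I) l i).
Proof.
move=> HF; elim: (index_enum I) => [|i s IH].
  rewrite big_nil; apply: (Un_cv_ext (fun _ => 0)); last exact: CV_const.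
  by move=> k; rewrite big_nil.
by rewrite big_cons; apply: (Un_cv_ext (fun k => F i k + \big[Rplus/R0]_(j <- s) F j k));
  [move=> k; rewrite big_cons | exact: CV_plus].
Qed.

Section VectorSequences.
Variables (d : nat) (Z : nat -> vec d).

Lemma vec_cauchy_cv :
  (forall e, 0 < e -> exists N, forall j k, (N <= j)%coq_nat -> (N <= k)%coq_nat ->
     norm2 (vsub (Z j) (Z k)) < e) ->
  exists y : vec d, forall i, Un_cv (fun k => Z k i) (y i).
Proof.
move=> cauchy; have coord_cauchy : forall i, Cauchy_crit (fun k => Z k i).
  move=> i e e0; have [N HN] := cauchy (e * e) ltac:(nra).
  exists N => j k Nj Nk; rewrite /Rdist -(Rabs_pos_eq e); last lra.
  apply: Rsqr_lt_abs_0.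
  have := coord_sqr_le_norm2 (vsub (Z j) (Z k)) i.
  by have := HN j k Nj Nk; rewrite /Rsqr /vsub; lra.
by exists (fun i => proj1_sig (R_complete _ (coord_cauchy i))) => i; case: R_complete.
Qed.

Lemma cv_norm2_sub y u : (forall i, Un_cv (fun k => Z k i) (y i)) ->
  Un_cv (fun k => norm2 (vsub (Z k) u)) (norm2 (vsub y u)).
Proof.
move=> Zy; apply: (@CV_rsum 'I_d (fun i k => vsub (Z k) u i * vsub (Z k) u i)
  (fun i => vsub y u i * vsub y u i)) => i.
by apply: CV_mult; apply: CV_minus => //; exact: CV_const.
Qed.

End VectorSequences.

Section ProxExistence.
Variables (d : nat) (h : vec d -> ext).
Hypothesis h_proper : proper_fn h.
Hypothesis h_lsc : lsc h.
Hypothesis h_convex : convex_ext h.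

Lemma convex_lsc_minorant :
  exists y0 a K, 0 <= K /\ forall z c, h z = Some c -> a - K * norm (vsub z y0) <= c.
Proof.
have [y0] := h_proper; case E0: (h y0) => [a0|] // _.
have [del [del0 Hdel]] := @h_lsc y0 (a0 - 1) ltac:(rewrite E0 /=; lra).
exists y0, (a0 - 1), (2 / del); split=> [|z c Hz]; first by apply/Rlt_le/Rdiv_lt_0_compat; lra.
set N := norm (vsub z y0); have N0 : 0 <= N := norm_ge0 _.
have KN0 : 0 <= 2 / del * N by apply: Rmult_le_pos => //; apply/Rlt_le/Rdiv_lt_0_compat; lra.
case: (Rlt_le_dec N del) => [/Hdel|delN]; first by rewrite Hz /=; lra.
(* Far from [y0], convexity transfers the bound at the point of [[y0, z]] at
   distance [del / 2] from [y0] to [z]. *)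
set t := del / (2 * N).
have t0 : 0 < t by apply: Rdiv_lt_0_compat; lra.
have t1 : t <= 1 by rewrite /t; apply/(Rmult_le_reg_r (2 * N)); [lra | field_simplify; lra].
have [v [Hv v_le]] := h_convex Hz E0 (conj (Rlt_le _ _ t0) t1).
have near : norm (vsub (vadd (vscale t z) (vscale (1 - t) y0)) y0) < del.
  have -> : vsub (vadd (vscale t z) (vscale (1 - t) y0)) y0 = vscale t (vsub z y0).
    by apply: functional_extensionality => k; rewrite /vsub /vadd /vscale; ring.
  rewrite norm_scale Rabs_pos_eq; last lra.
  rewrite -/N /t; have -> : del / (2 * N) * N = del / 2 by field; lra.
  lra.
have := Hdel _ near; rewrite Hv /= => a0v.
have : a0 - / t < c.
  apply: (Rmult_lt_reg_l t) => //.
  have -> : t * (a0 - / t) = t * a0 - 1 by field; lra.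
  lra.
have -> : / t = 2 / del * N by rewrite /t; field; lra.
lra.
Qed.

Lemma lsc_eventually_gt (Z : nat -> vec d) y a :
  Un_cv (fun k => norm2 (vsub (Z k) y)) 0 -> lt_ext a (h y) ->
  exists N, forall k, (N <= k)%coq_nat -> lt_ext a (h (Z k)).
Proof.
move=> Zy ay; have [del [del0 Hdel]] := @h_lsc y a ay.
have [N HN] := Zy (del * del) ltac:(nra); exists N => k /HN.
rewrite /Rdist Rminus_0_r Rabs_pos_eq; last exact: norm2_ge0.
by move=> /(norm_lt_of_norm2 del0) /Hdel.
Qed.

Variables (eta : R) (u : vec d).
Hypothesis eta0 : 0 < eta.

Let q (w : vec d) := norm2 (vsub w u) / (2 * eta).

Lemma prox_obj_convex_comb t y z : q (vadd (vscale t z) (vscale (1 - t) y))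
   = t * q z + (1 - t) * q y - t * (1 - t) * (norm2 (vsub z y) / (2 * eta)).
Proof. by rewrite /q norm2_convex_comb; field; lra. Qed.

Lemma prox_obj_bounded_below : exists M, forall z c, h z = Some c -> M <= c + q z.
Proof.
have [y0 [a [K [K0 minor]]]] := convex_lsc_minorant.
set P := norm2 (vsub u y0).
exists (a - eta * K * K - P / (2 * eta)) => z c /minor.
set N := norm (vsub z y0) => aKN.
have N2 : N * N <= 2 * norm2 (vsub z u) + 2 * P.
  by have := norm2_sub_young z y0 u Rlt_0_1; rewrite Rinv_1 /N norm_sqr -/P; lra.
have KN : K * N <= N * N / (4 * eta) + eta * K * K.
  apply: (Rmult_le_reg_l (4 * eta)); first lra.
  have -> : 4 * eta * (N * N / (4 * eta) + eta * K * K) = N * N + 4 * eta * eta * K * K.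
    by field; lra.
  have sq := Rle_0_sqr (N - 2 * eta * K); rewrite /Rsqr in sq; nra.
have : N * N / (4 * eta) <= q z + P / (2 * eta).
  apply: (Rmult_le_reg_l (4 * eta)); first lra.
  have -> : 4 * eta * (q z + P / (2 * eta)) = 2 * norm2 (vsub z u) + 2 * P.
    by rewrite /q; field; lra.
  by have -> : 4 * eta * (N * N / (4 * eta)) = N * N by field; lra.
lra.
Qed.

Lemma prox_obj_inf : exists m, (forall z c, h z = Some c -> m <= c + q z) /\
  forall e, 0 < e -> exists z c, h z = Some c /\ c + q z < m + e.
Proof.
have [M HM] := prox_obj_bounded_below.
have [y0] := h_proper; case E0: (h y0) => [a0|] // _.
pose E r := exists z c, h z = Some c /\ r = - (c + q z).
have [l [l_ub l_lub]] : {l | is_lub E l}.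
  apply: completeness; last by exists (- (a0 + q y0)), y0, a0.
  by exists (- M) => r [z [c [/HM Hz ->]]]; lra.
exists (- l); split=> [z c Hz|e e0].
  by have := l_ub (- (c + q z)) (ex_intro _ z (ex_intro _ c (conj Hz erefl))); lra.
apply: NNPP => far.
suff /l_lub : is_upper_bound E (l - e) by lra.
move=> r [z [c [Hz ->]]]; apply: Rnot_lt_le => lt_r.
by apply: far; exists z, c; split=> //; lra.
Qed.

Lemma near_minimizers_close m z1 z2 c1 c2 e1 e2 :
  (forall z c, h z = Some c -> m <= c + q z) -> h z1 = Some c1 -> h z2 = Some c2 ->
  c1 + q z1 < m + e1 -> c2 + q z2 < m + e2 -> norm2 (vsub z1 z2) <= 4 * eta * (e1 + e2).
Proof.
move=> m_lb Hz1 Hz2 z1_near z2_near.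
have [v [Hv v_le]] := @h_convex z1 z2 c1 c2 (/ 2) Hz1 Hz2 ltac:(lra).
have := m_lb _ _ Hv; rewrite prox_obj_convex_comb => mid.
have X_le : norm2 (vsub z1 z2) / (2 * eta) <= 2 * (e1 + e2) by lra.
have -> : norm2 (vsub z1 z2) = 2 * eta * (norm2 (vsub z1 z2) / (2 * eta)) by field; lra.
nra.
Qed.

Section MinimizingSequence.
Variables (m : R) (Z : nat -> vec d).
Hypothesis m_lb : forall z c, h z = Some c -> m <= c + q z.
Hypothesis Z_min : forall k, exists c, h (Z k) = Some c /\ c + q (Z k) < m + / (INR k + 1).

Lemma minimizing_seq_cv : exists y : vec d, forall i, Un_cv (fun k => Z k i) (y i).
Proof.
apply: vec_cauchy_cv => e e0.
have [N HN] := @inv_succ_eventually_lt (e / (8 * eta)) ltac:(apply: Rdiv_lt_0_compat; lra).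
exists N => j k Nj Nk.
have [cj [Hj j_near]] := Z_min j; have [ck [Hk k_near]] := Z_min k.
apply: Rle_lt_trans (near_minimizers_close m_lb Hj Hk j_near k_near) _.
have -> : e = 4 * eta * (2 * (e / (8 * eta))) by field; lra.
by apply: Rmult_lt_compat_l; [lra | have := HN j Nj; have := HN k Nk; lra].
Qed.

Lemma minimizing_limit_le y a : (forall i, Un_cv (fun k => Z k i) (y i)) ->
  lt_ext a (h y) -> a + q y <= m.
Proof.
move=> Zy ay; apply: Rnot_lt_le => gap; set g := a + q y - m.
have g0 : 0 < g by rewrite /g; lra.
have [N1 HN1] : exists N, forall k, (N <= k)%coq_nat -> lt_ext a (h (Z k)).
  by apply: lsc_eventually_gt ay; rewrite -(norm2_subvv y); exact: cv_norm2_sub.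
have [N2 HN2] := @cv_norm2_sub _ Z y u Zy (g * eta) ltac:(nra).
have [N3 HN3] := @inv_succ_eventually_lt (g / 2) ltac:(lra).
pose k := Nat.max N1 (Nat.max N2 N3).
have [ck [Hk k_near]] := Z_min k.
have := HN1 k ltac:(lia); rewrite Hk /= => a_lt.
have := HN2 k ltac:(lia); rewrite /Rdist => /Rabs_def2 [_ qk].
have qZk : q y - g / 2 < q (Z k).
  apply: (Rmult_lt_reg_l (2 * eta)); first lra.
  by rewrite /q; field_simplify; lra.
by have := HN3 k ltac:(lia); rewrite /g in qZk *; lra.
Qed.

End MinimizingSequence.

Lemma prox_exists : exists y, is_prox h eta u y.
Proof.
have [m [m_lb m_inf]] := prox_obj_inf.
have Zspec k : {z | exists c, h z = Some c /\ c + q z < m + / (INR k + 1)}.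
  apply: constructive_indefinite_description.
  have k1 : 0 < / (INR k + 1) by apply: Rinv_0_lt_compat; have := pos_INR k; lra.
  have [z [c [Hz Hc]]] := m_inf _ k1.
  by exists z, c.
pose Z k := proj1_sig (Zspec k).
have Z_min k : exists c, h (Z k) = Some c /\ c + q (Z k) < m + / (INR k + 1) := proj2_sig (Zspec k).
have [y Zy] := minimizing_seq_cv m_lb Z_min.
have below a := minimizing_limit_le Z_min (a := a) Zy.
case Ey: (h y) (below (m - q y + 1)) => [c|] => [_|]; last by move=> /(_ I); lra.
have c_le : c + q y <= m.
  apply: Rnot_lt_le => lt_c.
  by have := below ((c + m - q y) / 2); rewrite Ey /= => /(_ ltac:(lra)); lra.
exists y => z; rewrite Ey /=; case Ez: (h z) => [cz|] //=.
by have := m_lb _ _ Ez; rewrite /q in c_le *; lra.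
Qed.

End ProxExistence.

(** * The proximal gradient step *)

Section Prox.
Variables (d : nat) (h : vec d -> ext) (eta : R).
Hypothesis h_proper : proper_fn h.
Hypothesis h_lsc : lsc h.
Hypothesis h_convex : convex_ext h.
Hypothesis eta0 : 0 < eta.

Lemma prox_spec u : is_prox h eta u (prox h eta u).
Proof. by rewrite /prox; apply: epsilon_spec; exact: prox_exists. Qed.

Lemma prox_finite u : exists c, h (prox h eta u) = Some c.
Proof.
have [y0] := h_proper; case E0: (h y0) => [a0|] // _.
by have := prox_spec u y0; rewrite E0; case: (h _) => [c|] //= _; exists c.
Qed.

Lemma prox_three_point u y z cy cz : is_prox h eta u y -> h y = Some cy -> h z = Some cz ->
  cy + norm2 (vsub y u) / (2 * eta) + norm2 (vsub y z) / (2 * eta)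
  <= cz + norm2 (vsub z u) / (2 * eta).
Proof.
move=> y_prox Hy Hz.
set X := cy + _ + _; set Y := cz + _; set P := norm2 (vsub y z) / (2 * eta).
have P0 : 0 <= P by apply: Rmult_le_pos; [exact: norm2_ge0 | apply/Rlt_le/Rinv_0_lt_compat; lra].
(* Compare [y] with the points [y + t (z - y)], [0 < t <= 1]. *)
have segment t : 0 < t <= 1 -> X <= Y + t * P.
  move=> t01; have [v [Hv v_le]] := @h_convex z y cz cy t Hz Hy ltac:(lra).
  have := y_prox (vadd (vscale t z) (vscale (1 - t) y)).
  rewrite Hy Hv /= prox_obj_convex_comb // (norm2_subC z y) -/P => H.
  have : t * X <= t * (Y + t * P) by rewrite /X /Y -/P; nra.
  by apply: Rmult_le_reg_l; lra.
apply: Rnot_lt_le => YX.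
set t := Rmin 1 ((X - Y) / (2 * (P + 1))).
have t_pos : 0 < (X - Y) / (2 * (P + 1)) by apply: Rdiv_lt_0_compat; lra.
have t01 : 0 < t <= 1 by split; [apply: Rmin_glb_lt; lra | exact: Rmin_l].
have : t * P < X - Y.
  apply: (Rle_lt_trans _ ((X - Y) / (2 * (P + 1)) * P)).
    by apply: Rmult_le_compat_r => //; exact: Rmin_r.
  apply: (Rmult_lt_reg_l (2 * (P + 1))); first lra.
  have -> : 2 * (P + 1) * ((X - Y) / (2 * (P + 1)) * P) = (X - Y) * P by field; lra.
  nra.
have := segment t t01; lra.
Qed.

Variables (f : vec d -> R) (g : vec d -> vec d) (L : R).
Hypothesis f_taylor : forall x y,
  Rabs (f y - f x - dot (g x) (vsub y x)) <= L / 2 * norm2 (vsub y x).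

Lemma prox_grad_step x v z cy cz :
  let y := prox h eta (vsub x (vscale eta v)) in
  h y = Some cy -> h z = Some cz ->
  f y + cy <= f z + cz + dot (vsub y z) (vsub (g x) v)
     + (L / 2 - / (2 * eta)) * norm2 (vsub y x) + (L / 2 + / (2 * eta)) * norm2 (vsub z x)
     - / (2 * eta) * norm2 (vsub y z).
Proof.
move=> y Hy Hz.
have three := prox_three_point (prox_spec (vsub x (vscale eta v))) Hy Hz.
have shift := norm2_sub_shift x y z eta v.
have upper := Rle_trans _ _ _ (Rle_abs _) (f_taylor x y).
have lower : - (f z - f x - dot (g x) (vsub z x)) <= L / 2 * norm2 (vsub z x).
  by apply: Rle_trans (Rle_abs _) _; rewrite Rabs_Ropp.
have dots : dot (g x) (vsub y x) - dot (g x) (vsub z x) + dot (vsub z y) v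
            = dot (vsub y z) (vsub (g x) v) by coordinatewise.
rewrite -/y /Rdiv !(Rmult_comm _ (/ (2 * eta))) in three.
have : / (2 * eta) * norm2 (vsub z (vsub x (vscale eta v)))
       - / (2 * eta) * norm2 (vsub y (vsub x (vscale eta v)))
     = / (2 * eta) * norm2 (vsub z x) - / (2 * eta) * norm2 (vsub y x) + dot (vsub z y) v.
  by rewrite -Rmult_minus_distr_l shift; field; lra.
lra.
Qed.

End Prox.

(** * Minibatch variance *)

Section Resampling.
Variables (X B : finType) (get : X -> B) (put : X -> B -> X).
Hypothesis get_put : forall x y, get (put x y) = y.
Hypothesis put_put : forall x y z, put (put x y) z = put x z.
Hypothesis put_get : forall x, put x (get x) = x.

(* Redrawing the [get] component of a uniform [x] uniformly leaves [x] uniform. *)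
Lemma rsum_resample (G : X -> R) :
  (\rsum_(x : X) G x) * INR #|B| = \rsum_(x : X) \rsum_(y : B) G (put x y).
Proof.
have fiber y z : \big[Rplus/R0]_(x | get x == z) G (put x y) = \big[Rplus/R0]_(x | get x == y) G x.
  rewrite (reindex_onto (put^~ z) (put^~ y)); last by move=> x /eqP <-; rewrite put_put put_get.
  apply: eq_big => [x|x /andP [_ /eqP ->] //].
  rewrite get_put eqxx /= put_put; apply/eqP/eqP => [<-|<-]; first by rewrite get_put.
  by rewrite put_get.
rewrite exchange_rsum (partition_big get xpredT) //= -rsumZr.
apply: eq_bigr => y _; rewrite [RHS](partition_big get xpredT) //=.
transitivity (\rsum_(z : B) \big[Rplus/R0]_(x | get x == y) G x).
  by rewrite rsum_const Rmult_comm.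
by apply: eq_bigr => z _; rewrite fiber.
Qed.

End Resampling.

Section Minibatch.
Variables (n b : nat).
Hypothesis n0 : (0 < n)%N.
Notation batch := {ffun 'I_b -> 'I_n}.

Definition batch_set (I : batch) (j : 'I_b) (y : 'I_n) : batch :=
  [ffun k => if k == j then y else I k].

Lemma rsum_batch_resample (G : batch -> R) j :
  (\rsum_(I : batch) G I) * INR n = \rsum_(I : batch) \rsum_(y < n) G (batch_set I j y).
Proof.
rewrite -[in INR n](card_ord n).
apply: (rsum_resample (get := fun I : batch => I j)) => [I y|I y z|I].
- by rewrite /batch_set ffunE eqxx.
- by apply/ffunP => k; rewrite /batch_set !ffunE; case: (k == j).
- by apply/ffunP => k; rewrite /batch_set !ffunE; case: (eqVneq k j) => [->|].
Qed.

Variable e : 'I_n -> R.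
Hypothesis e_centered : \rsum_(i < n) e i = 0.

Lemma rsum_batch_cross j j' : j != j' -> \rsum_(I : batch) (e (I j) * e (I j')) = 0.
Proof.
move=> jj'; have n0' : 0 < INR n by apply/lt_0_INR/ltP.
apply: (Rmult_eq_reg_r (INR n)); last lra.
rewrite Rmult_0_l (rsum_batch_resample _ j).
rewrite (eq_bigr (fun I : batch => e (I j') * \rsum_(y < n) e y)).
  by rewrite e_centered big1 // => I _; ring.
move=> I _; transitivity (\rsum_(y < n) (e (I j') * e y)); last exact: rsumZ.
by apply: eq_bigr => y _; rewrite /batch_set !ffunE eqxx eq_sym (negbTE jj') Rmult_comm.
Qed.

Lemma rsum_batch_diag j :
  \rsum_(I : batch) (e (I j) * e (I j)) = INR #|batch| * (/ INR n * \rsum_(i < n) (e i * e i)).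
Proof.
have n0' : 0 < INR n by apply/lt_0_INR/ltP.
apply: (Rmult_eq_reg_r (INR n)); last lra.
rewrite (rsum_batch_resample _ j) (eq_bigr (fun I : batch => \rsum_(y < n) (e y * e y))).
  by rewrite rsum_const -[#|_|]/#|batch|; field; lra.
by move=> I _; apply: eq_bigr => y _; rewrite /batch_set ffunE eqxx.
Qed.

Lemma rsum_batch_sum_sqr :
  \rsum_(I : batch) ((\rsum_(j < b) e (I j)) * (\rsum_(j < b) e (I j)))
  = INR #|batch| * INR b * (/ INR n * \rsum_(i < n) (e i * e i)).
Proof.
transitivity (\rsum_(I : batch) \rsum_(j < b) \rsum_(j' < b) (e (I j) * e (I j'))).
  by apply: eq_bigr => I _; rewrite -rsumZr; apply: eq_bigr => j _; rewrite rsumZ.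
rewrite exchange_rsum.
have -> : forall X, INR #|batch| * INR b * X = \rsum_(j < b) (INR #|batch| * X).
  by move=> X; rewrite rsum_const card_ord; ring.
apply: eq_bigr => j _; rewrite exchange_rsum (bigD1 j) //= rsum_batch_diag.
rewrite [X in _ + X]big1 ?Rplus_0_r //.
by move=> j' jj'; apply: rsum_batch_cross; rewrite eq_sym.
Qed.

End Minibatch.

Lemma rsum_sqr_centered_le n (a : 'I_n -> R) : (0 < n)%N ->
  \rsum_(i < n) ((a i - / INR n * \rsum_(i < n) a i) * (a i - / INR n * \rsum_(i < n) a i))
  <= \rsum_(i < n) (a i * a i).
Proof.
move=> n0; have n0' : 0 < INR n by apply/lt_0_INR/ltP.
set m := / INR n * \rsum_(i < n) a i.
have sum_a : \rsum_(i < n) a i = INR n * m by rewrite /m; field; lra.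
have : \rsum_(i < n) (a i * a i) - \rsum_(i < n) ((a i - m) * (a i - m)) = INR n * (m * m).
  rewrite -rsumB (eq_bigr (fun i => 2 * m * a i - m * m)); last by move=> i _; ring.
  by rewrite rsumB rsumZ rsum_const card_ord sum_a; ring.
by have := Rle_0_sqr m; rewrite /Rsqr; nra.
Qed.

Section MinibatchVectors.
Variables (d n b : nat).
Hypotheses (n0 : (0 < n)%N) (b0 : (0 < b)%N).
Notation batch := {ffun 'I_b -> 'I_n}.

Lemma minibatch_mean_dev (a : 'I_n -> vec d) :
  \rsum_(I : batch)
    norm2 (fun k => / INR n * (\rsum_(i < n) a i k) - / INR b * \rsum_(j < b) a (I j) k)
  <= INR #|batch| / INR b * (/ INR n * \rsum_(i < n) norm2 (a i)).
Proof.
have n0' : 0 < INR n by apply/lt_0_INR/ltP.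
have b0' : 0 < INR b by apply/lt_0_INR/ltP.
pose e (k : 'I_d) (i : 'I_n) := a i k - / INR n * \rsum_(i < n) a i k.
have e_centered k : \rsum_(i < n) e k i = 0.
  (* [/=] turns the binders [Finite.sort (ordinal n)] produced by [rsumB] back
     into ['I_n], so that [field] recognises the two sums as the same atom. *)
  by rewrite /e rsumB rsum_const card_ord /=; field; lra.
have dev k (I : batch) : / INR n * (\rsum_(i < n) a i k) - / INR b * (\rsum_(j < b) a (I j) k)
                          = - / INR b * \rsum_(j < b) e k (I j).
  by rewrite /e rsumB rsum_const card_ord /=; field; lra.
rewrite /norm2 /dot exchange_rsum (exchange_rsum (fun i k => a i k * a i k)) -!rsumZ.
apply: ler_rsum => k; rewrite (eq_bigr (fun I : batch => / INR b * / INR b *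
  ((\rsum_(j < b) e k (I j)) * (\rsum_(j < b) e k (I j))))); last by move=> I _; rewrite dev; ring.
rewrite rsumZ rsum_batch_sum_sqr //.
have := rsum_sqr_centered_le (a^~ k) n0; rewrite -/(e k) => sqr_le.
have -> : forall X, / INR b * / INR b * (INR #|batch| * INR b * (/ INR n * X))
                    = INR #|batch| / INR b * / INR n * X by move=> X; field; lra.
rewrite -Rmult_assoc; apply: Rmult_le_compat_l => //.
apply: Rmult_le_pos; last exact/Rlt_le/Rinv_0_lt_compat.
by apply: Rmult_le_pos; [exact: pos_INR | exact/Rlt_le/Rinv_0_lt_compat].
Qed.

Lemma vr_grad_variance L (gs : nat -> vec d -> vec d) x xt (It : batch -> nat -> nat) :
  0 < L -> (forall i, (i < n)%N -> smooth L (gs i)) ->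
  (forall I (j : 'I_b), It I j = I j) ->
  \rsum_(I : batch) norm2 (vsub (gavg n gs x) (vr_grad gs b (It I) x xt (gavg n gs xt)))
  <= INR #|batch| * (L * L / INR b * norm2 (vsub x xt)).
Proof.
move=> L0 smooth_gs It_draws.
have n0' : 0 < INR n by apply/lt_0_INR/ltP.
have b0' : 0 < INR b by apply/lt_0_INR/ltP.
pose a (i : 'I_n) := vsub (gs i x) (gs i xt).
rewrite (eq_bigr (fun I : batch => norm2 (fun k =>
  / INR n * (\rsum_(i < n) a i k) - / INR b * \rsum_(j < b) a (I j) k))); last first.
  move=> I _; congr norm2; apply: functional_extensionality => k.
  rewrite /a /vsub /vr_grad /gavg (eq_bigr (fun j => gs (I j) x k - gs (I j) xt k)).
    by rewrite !rsumB /=; ring.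
  by move=> j _; rewrite It_draws.
apply: Rle_trans (minibatch_mean_dev a) _.
have a_le : \rsum_(i < n) norm2 (a i) <= INR n * (L * L * norm2 (vsub x xt)).
  rewrite -[in INR n](card_ord n) -rsum_const; apply: ler_rsum => i.
  exact: smooth_norm2 L0 (smooth_gs i (ltn_ord i)) x xt.
have -> : INR #|batch| * (L * L / INR b * norm2 (vsub x xt))
          = INR #|batch| / INR b * (/ INR n * (INR n * (L * L * norm2 (vsub x xt)))).
  by field; lra.
apply: Rmult_le_compat_l.
  by apply: Rmult_le_pos; [exact: pos_INR | exact/Rlt_le/Rinv_0_lt_compat].
by apply: Rmult_le_compat_l => //; exact/Rlt_le/Rinv_0_lt_compat.
Qed.

End MinibatchVectors.

(** * One step of ProxSVRG *)

(* The junk value [0] where [F = +oo] is never used: it is only evaluated on [dom h]. *)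
Definition Fval d n (fs : nat -> vec d -> R) (h : vec d -> ext) (x : vec d) : R :=
  if Fobj n fs h x is Some v then v else 0.

Section ProxSVRGStep.
Variables (d n : nat) (fs : nat -> vec d -> R) (gs : nat -> vec d -> vec d) (L : R).
Variable h : vec d -> ext.
Hypothesis n0 : (0 < n)%N.
Hypothesis L0 : 0 < L.
Hypothesis grad_fs : forall i, (i < n)%N -> has_gradient (fs i) (gs i).
Hypothesis smooth_gs : forall i, (i < n)%N -> smooth L (gs i).
Hypothesis h_proper : proper_fn h.
Hypothesis h_lsc : lsc h.
Hypothesis h_convex : convex_ext h.

Let eta := / (3 * L).
Let F := Fval n fs h.

Lemma eta_gt0 : 0 < eta.
Proof. by apply: Rinv_0_lt_compat; lra. Qed.

Lemma Fval_dom x c : h x = Some c -> F x = c + favg n fs x.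
Proof. by rewrite /F /Fval /Fobj => ->. Qed.

Lemma prox_Fval u :
  exists c, h (prox h eta u) = Some c /\ F (prox h eta u) = c + favg n fs (prox h eta u).
Proof.
have [c Hc] := prox_finite h_proper h_lsc h_convex eta_gt0 u.
by exists c; split=> //; exact: Fval_dom.
Qed.

Lemma inexact_prox_step x cx xt v c' M :
  h x = Some cx -> 0 < M -> 0 <= c' -> c' * (1 + M) <= L ->
  let xp := prox h eta (vsub x (vscale eta v)) in
  let xb := prox h eta (vsub x (vscale eta (gavg n gs x))) in
  F xp + c' * norm2 (vsub xp xt)
  <= F x - L / 2 * norm2 (vsub xb x) + eta / 2 * norm2 (vsub (gavg n gs x) v)
     + c' * (1 + / M) * norm2 (vsub x xt).
Proof.
move=> Hx M0 c'0 c'M xp xb.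
(* Compare [xb] with [x], then [xp] with [xb]; Young's inequality absorbs the cross term. *)
have [cb [Hb Fb]] := prox_Fval (vsub x (vscale eta (gavg n gs x))).
have [cp [Hp Fp]] := prox_Fval (vsub x (vscale eta v)).
rewrite -/xp -/xb in Hb Fb Hp Fp; rewrite Fp (Fval_dom Hx).
have inv2eta : / (2 * eta) = 3 * L / 2 by rewrite /eta; field; lra.
have taylor x y := favg_taylor x y n0 L0 grad_fs smooth_gs.
have full_step := prox_grad_step h_proper h_lsc h_convex eta_gt0 taylor Hb Hx.
rewrite -/xb dot_subvv norm2_subvv inv2eta in full_step.
have noisy_step := prox_grad_step h_proper h_lsc h_convex eta_gt0 taylor (x := x) (v := v) Hp Hb.
rewrite -/xp inv2eta in noisy_step.
have young := dot_young (vsub xp xb) (vsub (gavg n gs x) v) (a := 3 * L / 2) ltac:(lra).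
rewrite (_ : / (4 * (3 * L / 2)) = eta / 2) in young; last by rewrite /eta; field; lra.
have split_xt := norm2_sub_young xp xt x M0.
have : c' * norm2 (vsub xp xt) <= L * norm2 (vsub xp x) + c' * (1 + / M) * norm2 (vsub x xt).
  have := norm2_ge0 (vsub xp x); nra.
lra.
Qed.

Lemma expected_prox_step b x cx xt c' M (It : {ffun 'I_b -> 'I_n} -> nat -> nat) :
  (0 < b)%N -> (forall I (j : 'I_b), It I j = I j) ->
  h x = Some cx -> 0 < M -> 0 <= c' -> c' * (1 + M) <= L ->
  let xp I := prox h eta (vsub x (vscale eta (vr_grad gs b (It I) x xt (gavg n gs xt)))) in
  let xb := prox h eta (vsub x (vscale eta (gavg n gs x))) in
  (/ INR #|{: {ffun 'I_b -> 'I_n}}| *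
     \rsum_(I : {ffun 'I_b -> 'I_n}) (F (xp I) + c' * norm2 (vsub (xp I) xt)))
  <= F x + (c' * (1 + / M) + L / (6 * INR b)) * norm2 (vsub x xt) - L / 2 * norm2 (vsub xb x).
Proof.
move=> b0 It_draws Hx M0 c'0 c'M xp xb.
set N := INR #|{: {ffun 'I_b -> 'I_n}}|.
have N0 : 0 < N by apply/lt_0_INR/ltP/card_gt0P; exists [ffun _ => Ordinal n0].
have b0' : 0 < INR b by apply/lt_0_INR/ltP.
have var := vr_grad_variance n0 b0 x xt L0 smooth_gs It_draws.
set A := F x - L / 2 * norm2 (vsub xb x) + c' * (1 + / M) * norm2 (vsub x xt).
set W := fun I => norm2 (vsub (gavg n gs x) (vr_grad gs b (It I) x xt (gavg n gs xt))).
have steps : \rsum_(I : {ffun 'I_b -> 'I_n}) (F (xp I) + c' * norm2 (vsub (xp I) xt))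
             <= \rsum_(I : {ffun 'I_b -> 'I_n}) (A + eta / 2 * W I).
  apply: ler_rsum => I; rewrite /A /W /xp /xb.
  have := inexact_prox_step xt (vr_grad gs b (It I) x xt (gavg n gs xt)) Hx M0 c'0 c'M.
  by cbv zeta; lra.
have split_sum : \rsum_(I : {ffun 'I_b -> 'I_n}) (A + eta / 2 * W I)
                 = N * A + eta / 2 * \rsum_(I : {ffun 'I_b -> 'I_n}) W I.
  by rewrite rsumD rsum_const rsumZ.
have noise : eta / 2 * (\rsum_(I : {ffun 'I_b -> 'I_n}) W I)
             <= N * (L / (6 * INR b) * norm2 (vsub x xt)).
  have -> : N * (L / (6 * INR b) * norm2 (vsub x xt))
            = eta / 2 * (N * (L * L / INR b * norm2 (vsub x xt))) by rewrite /eta; field; lra.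
  by apply: Rmult_le_compat_l; [have := eta_gt0; lra | exact: var].
apply: (Rmult_le_reg_l N) => //; rewrite -Rmult_assoc Rinv_r ?Rmult_1_l; last lra.
have -> : N * (F x + (c' * (1 + / M) + L / (6 * INR b)) * norm2 (vsub x xt)
               - L / 2 * norm2 (vsub xb x))
          = N * A + N * (L / (6 * INR b) * norm2 (vsub x xt)) by rewrite /A; ring.
lra.
Qed.

End ProxSVRGStep.

(** * Telescoping over all epochs *)

Section Draws.
Variables (n S m b : nat).

Definition draw_set (w : Omega n S m b) (s0 : 'I_S) (t0 : 'I_m) (I : {ffun 'I_b -> 'I_n})
  : Omega n S m b :=
  [ffun s => if s == s0 then [ffun t => if t == t0 then I else w s t] else w s].

Lemma draw_set_get w s0 t0 I : draw_set w s0 t0 I s0 t0 = I.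
Proof. by rewrite /draw_set ffunE eqxx ffunE eqxx. Qed.

Lemma draw_set_set w s0 t0 I J : draw_set (draw_set w s0 t0 I) s0 t0 J = draw_set w s0 t0 J.
Proof.
apply/ffunP => s; rewrite /draw_set !ffunE; case: (eqVneq s s0) => [->|] //.
by apply/ffunP => t; rewrite !ffunE; case: (t == t0).
Qed.

Lemma draw_set_id w s0 t0 : draw_set w s0 t0 (w s0 t0) = w.
Proof.
apply/ffunP => s; rewrite /draw_set !ffunE; case: (eqVneq s s0) => [->|] //.
by apply/ffunP => t; rewrite !ffunE; case: (eqVneq t t0) => [->|].
Qed.

Lemma draws_set_same w s0 t0 I (j : 'I_b) : draws (draw_set w s0 t0 I) s0 t0 j = I j.
Proof. by rewrite /draws !valK draw_set_get. Qed.

Lemma draws_set_other w s0 t0 I s t j : (s, t) <> (val s0, val t0) ->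
  draws (draw_set w s0 t0 I) s t j = draws w s t j.
Proof.
move=> st; rewrite /draws.
case: insubP => [s' _ Es|] //; case: insubP => [t' _ Et|] //; case: insubP => [j' _ _|] //.
rewrite /draw_set !ffunE; case: (eqVneq s' s0) => [ss0|] //.
rewrite ffunE; case: (eqVneq t' t0) => [tt0|] //.
by case: st; rewrite -Es -Et ss0 tt0.
Qed.

End Draws.

Section IterateIndependence.
Variables (d n : nat) (gs : nat -> vec d -> vec d) (h : vec d -> ext) (eta : R) (b m : nat).

Lemma inner_iter_ext (It It' : nat -> nat -> nat) snap t :
  (forall t', (t' < t)%N -> It t' =1 It' t') ->
  inner_iter n gs h eta b It snap t = inner_iter n gs h eta b It' snap t.
Proof.
elim: t => [|t IH] //= same; rewrite IH => [|t' /ltnW]; last exact: same.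
by rewrite (functional_extensionality _ _ (same t (ltnSn t))).
Qed.

Lemma snapshot_ext (idx idx' : nat -> nat -> nat -> nat) x0 s :
  (forall s', (s' < s)%N -> forall t, idx s' t =1 idx' s' t) ->
  snapshot n gs h eta b m idx x0 s = snapshot n gs h eta b m idx' x0 s.
Proof.
elim: s => [|s IH] //= same; rewrite IH => [|s' /ltnW]; last exact: same.
by apply: inner_iter_ext => t' _; exact: same.
Qed.

End IterateIndependence.

Fixpoint lyap_weight (M A : R) (k : nat) : R :=
  if k is k'.+1 then lyap_weight M A k' * (1 + / M) + A else 0.

Lemma lyap_weight_ge0 M A k : 0 < M -> 0 <= A -> 0 <= lyap_weight M A k.
Proof.
move=> M0 A0; elim: k => [|k IH] /=; first lra.
by have Minv := Rinv_0_lt_compat M M0; nra.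
Qed.

Lemma lyap_weight_closed M A k : 0 < M -> lyap_weight M A k = A * M * ((1 + / M) ^ k - 1).
Proof. by move=> M0; elim: k => [|k /= ->]; [rewrite /=; ring | field; lra]. Qed.

Lemma exp_pow_nat a k : exp a ^ k = exp (INR k * a).
Proof.
elim: k => [|k IH]; first by rewrite /= Rmult_0_l exp_0.
by rewrite -tech_pow_Rmult IH -exp_plus S_INR; congr exp; ring.
Qed.

Lemma pow_one_plus_inv_le3 (m k : nat) : (0 < m)%N -> (k <= m)%N -> (1 + / INR m) ^ k <= 3.
Proof.
move=> m0 km; have m0' : 0 < INR m by apply/lt_0_INR/ltP.
have inv0 := Rinv_0_lt_compat _ m0'.
apply: (Rle_trans _ ((1 + / INR m) ^ m)); first by apply: Rle_pow; [lra | exact/leP].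
apply: (Rle_trans _ (exp (/ INR m) ^ m)).
  by apply: pow_incr; split; [lra | apply/Rlt_le/exp_ineq1; lra].
by rewrite exp_pow_nat Rinv_r; [exact: exp_le_3 | lra].
Qed.

(* This is where [b >= m^2] is needed. *)
Lemma lyap_weight_bound (m b k : nat) L : (0 < m)%N -> (m * m <= b)%N -> (k < m)%N -> 0 < L ->
  lyap_weight (INR m) (L / (6 * INR b)) k * (1 + INR m) <= L.
Proof.
move=> m0 mmb km L0.
have m0' : 1 <= INR m by apply/(le_INR 1)/leP.
have mmb' : INR m * INR m <= INR b by rewrite -mult_INR; apply/le_INR/leP.
have pow3 := pow_one_plus_inv_le3 m0 (ltnW km).
have b0' : 0 < INR b by nra.
have pow1 : 1 <= (1 + / INR m) ^ k.
  by apply: pow_R1_Rle; have inv0 := Rinv_0_lt_compat (INR m) ltac:(lra); lra.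
rewrite lyap_weight_closed; last lra.
have -> : L / (6 * INR b) * INR m * ((1 + / INR m) ^ k - 1) * (1 + INR m)
          = L * (INR m * (1 + INR m) * ((1 + / INR m) ^ k - 1)) / (6 * INR b) by field; lra.
apply: (Rmult_le_reg_r (6 * INR b)); first lra.
rewrite /Rdiv Rmult_assoc Rinv_l ?Rmult_1_r; last lra.
have : INR m * (1 + INR m) * ((1 + / INR m) ^ k - 1) <= 2 * INR b * 2.
  by apply: Rmult_le_compat; nra.
nra.
Qed.

Section ProxSVRGDescent.
Variables (n d : nat) (L : R) (fs : nat -> vec d -> R) (gs : nat -> vec d -> vec d).
Variable h : vec d -> ext.
Variables (b m S : nat) (x0 : vec d) (cx0 : R).
Hypothesis n0 : (0 < n)%N.
Hypothesis L0 : 0 < L.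
Hypothesis grad_fs : forall i, (i < n)%N -> has_gradient (fs i) (gs i).
Hypothesis smooth_gs : forall i, (i < n)%N -> smooth L (gs i).
Hypothesis h_proper : proper_fn h.
Hypothesis h_lsc : lsc h.
Hypothesis h_convex : convex_ext h.
Hypotheses (m0 : (0 < m)%N) (b0 : (0 < b)%N) (mmb : (m * m <= b)%N).
Hypothesis x0_dom : h x0 = Some cx0.

Notation eta := (/ (3 * L)).
Notation Om := (Omega n S m b).
Notation batch := {ffun 'I_b -> 'I_n}.

Definition iter_at (w : Om) s t := iterate n gs h eta b m (draws w) x0 s t.
Definition snap_at (w : Om) s := snapshot n gs h eta b m (draws w) x0 s.
Definition weight t := lyap_weight (INR m) (L / (6 * INR b)) (m - t).
Definition potential s t (w : Om) :=
  Fval n fs h (iter_at w s t) + weight t * norm2 (vsub (iter_at w s t) (snap_at w s)).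
Definition sq_grad_map s t (w : Om) := norm2 (grad_map n gs h eta (iter_at w s t)).

Lemma inner_iter_dom It snap t : (exists c, h snap = Some c) ->
  exists c, h (inner_iter n gs h eta b It snap t) = Some c.
Proof. by case: t => [|t] //= _; exact: prox_finite h_proper h_lsc h_convex (eta_gt0 L0) _. Qed.

Lemma snap_at_dom w s : exists c, h (snap_at w s) = Some c.
Proof. by elim: s => [|s IH]; [exists cx0 | exact: inner_iter_dom]. Qed.

Lemma iter_at_dom w s t : exists c, h (iter_at w s t) = Some c.
Proof. exact/inner_iter_dom/snap_at_dom. Qed.

Lemma draw_set_past w (s0 : 'I_S) (t0 : 'I_m) I :
  iter_at (draw_set w s0 t0 I) s0 t0 = iter_at w s0 t0 /\
  snap_at (draw_set w s0 t0 I) s0 = snap_at w s0.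
Proof.
have snap_eq : snap_at (draw_set w s0 t0 I) s0 = snap_at w s0.
  apply: snapshot_ext => s' s's0 t j; apply: draws_set_other => [[s'E _]].
  by move: s's0; rewrite s'E ltnn.
split=> //; rewrite /iter_at /iterate -/(snap_at _ s0) snap_eq.
apply: inner_iter_ext => t' t't0 j; apply: draws_set_other => [[t'E]].
by move: t't0; rewrite t'E ltnn.
Qed.

Lemma grad_map_sq x : norm2 (grad_map n gs h eta x)
  = 9 * L * L * norm2 (vsub (prox h eta (vsub x (vscale eta (gavg n gs x)))) x).
Proof. by rewrite /grad_map norm2_scale norm2_subC Rinv_inv; ring. Qed.

Lemma weight_ge0 t : 0 <= weight t.
Proof.
apply: lyap_weight_ge0; first exact/lt_0_INR/ltP.
by apply/Rlt_le/Rdiv_lt_0_compat => //; have := lt_0_INR b (ltP b0); lra.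
Qed.

Lemma weight_pred (t : 'I_m) : weight t = weight t.+1 * (1 + / INR m) + L / (6 * INR b).
Proof. by rewrite /weight -subnSK. Qed.

Lemma weight_succ_bound (t : 'I_m) : weight t.+1 * (1 + INR m) <= L.
Proof. by apply: lyap_weight_bound => //; rewrite subnSK // leq_subr. Qed.

Lemma iter_at_succ w s t : iter_at w s t.+1 =
  prox h eta (vsub (iter_at w s t) (vscale eta
    (vr_grad gs b (draws w s t) (iter_at w s t) (snap_at w s) (gavg n gs (snap_at w s))))).
Proof. by []. Qed.

(* Only the current minibatch [w s0 t0] is averaged; the past draws stay fixed. *)
Lemma conditional_step w (s0 : 'I_S) (t0 : 'I_m) :
  \rsum_(I : batch) potential s0 t0.+1 (draw_set w s0 t0 I)
  <= INR #|batch| * (potential s0 t0 w - sq_grad_map s0 t0 w / (18 * L)).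
Proof.
have [cx Hx] := iter_at_dom w s0 t0.
have N0 : 0 < INR #|batch| by apply/lt_0_INR/ltP/card_gt0P; exists [ffun _ => Ordinal n0].
have m0' : 0 < INR m by apply/lt_0_INR/ltP.
have := expected_prox_step n0 L0 grad_fs smooth_gs h_proper h_lsc h_convex (snap_at w s0)
  (It := fun I => draws (draw_set w s0 t0 I) s0 t0) b0 (draws_set_same w s0 t0) Hx m0'
  (weight_ge0 t0.+1) (weight_succ_bound t0).
rewrite /= -weight_pred.
have -> : sq_grad_map s0 t0 w / (18 * L) = L / 2 * norm2 (vsub (prox h eta
    (vsub (iter_at w s0 t0) (vscale eta (gavg n gs (iter_at w s0 t0))))) (iter_at w s0 t0)).
  by rewrite /sq_grad_map grad_map_sq; field; lra.
rewrite (eq_bigr (fun I : batch => potential s0 t0.+1 (draw_set w s0 t0 I))); last first.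
  by move=> I _; rewrite /potential iter_at_succ; have [-> ->] := draw_set_past w s0 t0 I.
move=> avg; apply: (Rmult_le_reg_l (/ INR #|batch|)); first exact: Rinv_0_lt_compat.
by apply: Rle_trans avg _; right; rewrite /potential; field; lra.
Qed.

Lemma expected_step (s0 : 'I_S) (t0 : 'I_m) :
  \rsum_(w : Om) potential s0 t0.+1 w
  <= \rsum_(w : Om) (potential s0 t0 w - sq_grad_map s0 t0 w / (18 * L)).
Proof.
have N0 : 0 < INR #|batch| by apply/lt_0_INR/ltP/card_gt0P; exists [ffun _ => Ordinal n0].
apply: (Rmult_le_reg_r (INR #|batch|)) => //.
rewrite (rsum_resample (get := fun w : Om => w s0 t0) (fun w => draw_set_get w s0 t0)
  (fun w => draw_set_set w s0 t0) (fun w => draw_set_id w s0 t0)) -rsumZr.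
by apply: ler_rsum => w; rewrite Rmult_comm; exact: conditional_step.
Qed.

Lemma potential_first s w : potential s 0 w = Fval n fs h (snap_at w s).
Proof. by rewrite /potential /iter_at /iterate /= norm2_subvv Rmult_0_r Rplus_0_r. Qed.

Lemma potential_last s w : potential s m w = Fval n fs h (snap_at w s.+1).
Proof. by rewrite /potential /weight subnn /= Rmult_0_l Rplus_0_r. Qed.

Lemma sum_sq_grad_map_le :
  \rsum_(s < S) \rsum_(t < m) \rsum_(w : Om) sq_grad_map s t w
  <= 18 * L * (\rsum_(w : Om) Fval n fs h (snap_at w 0) - \rsum_(w : Om) Fval n fs h (snap_at w S)).
Proof.
pose Q s := \rsum_(w : Om) Fval n fs h (snap_at w s).
pose A s t := \rsum_(w : Om) potential s t w.
rewrite -/(Q 0%N) -/(Q S) -rsum_telescope -rsumZ; apply: ler_rsum => s.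
have -> : Q s - Q s.+1 = A s 0%N - A s m.
  by rewrite /Q /A; congr (_ - _); apply: eq_bigr => w _; rewrite ?potential_first ?potential_last.
rewrite -rsum_telescope -rsumZ; apply: ler_rsum => t.
have step := expected_step s t; rewrite rsumB in step.
have -> : \rsum_(w : Om) sq_grad_map s t w = 18 * L * \rsum_(w : Om) (sq_grad_map s t w / (18 * L)).
  by rewrite -rsumZ; apply: eq_bigr => w _; field; lra.
by apply: Rmult_le_compat_l; [lra | rewrite /A; lra].
Qed.

End ProxSVRGDescent.

Lemma epoch_batch_sizes (n b m : nat) : (1 <= n)%N -> (b ^ 3 = n ^ 2)%N ->
  (m ^ 3 <= n < m.+1 ^ 3)%N -> [/\ (0 < m)%N, (0 < b)%N & (m * m <= b)%N].
Proof.
move=> n1 bn /andP [mn nm].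
have m0 : (0 < m)%N.
  by case: m mn nm => [|m] //; rewrite exp1n ltnS leqn0 => _ /eqP n0; rewrite n0 in n1.
have b0 : (0 < b)%N.
  case: b bn => [|b] //; rewrite exp0n // => /esym/eqP.
  by rewrite expn_eq0 => /andP [/eqP n0 _]; rewrite n0 in n1.
split=> //; rewrite -(leq_exp2r _ _ (isT : (0 < 3)%N)) bn.
by rewrite (_ : (m * m) ^ 3 = (m ^ 3) ^ 2)%N ?leq_exp2r // mulnn -!expnM mulnC.
Qed.

Lemma expected_sq_grad_map_sum d n gs (h : vec d -> ext) eta x0 S m b :
  expected_sq_grad_map n gs h eta x0 S m b
  = / INR #|{: Omega n S m b}| * (/ INR (S * m) *
      \rsum_(s < S) \rsum_(t < m) \rsum_(w : Omega n S m b)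
        norm2 (grad_map n gs h eta (iterate n gs h eta b m (draws w) x0 s t))).
Proof.
rewrite /expected_sq_grad_map rsumZ exchange_rsum; congr (_ * (_ * _)).
by apply: eq_bigr => s _; rewrite exchange_rsum.
Qed.

Theorem theorem2
  (n d : nat) (Hn : (1 <= n)%N) (Hd : (1 <= d)%N)
  (L : R) (HL : 0 < L)
  (fs : nat -> vec d -> R) (gs : nat -> vec d -> vec d)
  (Hgrad : forall i, (i < n)%N -> has_gradient (fs i) (gs i))
  (Hsmooth : forall i, (i < n)%N -> smooth L (gs i))
  (h : vec d -> ext)
  (Hproper : proper_fn h) (Hlsc : lsc h) (Hconv : convex_ext h) (Hclosed : closed_dom h)
  (xstar : vec d)
  (Hmin : forall z, ext_le (Fobj n fs h xstar) (Fobj n fs h z))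
  (b m T S : nat)
  (Hb : (b ^ 3 = n ^ 2)%N)                       (* b = n^{2/3}, an integer *)
  (Hm : (m ^ 3 <= n < m.+1 ^ 3)%N)               (* m = floor (n^{1/3}) *)
  (HT : (0 < T)%N) (HTS : T = (S * m)%N)          (* T a (positive) multiple of m, S = T/m *)
  (x0 : vec d) (Fx0 Fstar : R)
  (HFx0 : Fobj n fs h x0 = Some Fx0) (HFstar : Fobj n fs h xstar = Some Fstar) :
  expected_sq_grad_map n gs h (/ (3 * L)) x0 S m b
    <= 18 * L * (Fx0 - Fstar) / INR T.
Proof.
have [m0 b0 mmb] := epoch_batch_sizes Hn Hb Hm.
have [cx0 Hx0] : exists c, h x0 = Some c.
  by move: HFx0; rewrite /Fobj; case: (h x0) => [c|] // _; exists c.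
have descent := sum_sq_grad_map_le S Hn HL Hgrad Hsmooth Hproper Hlsc Hconv m0 b0 mmb Hx0.
set N := INR #|{: Omega n S m b}|.
have N0 : 0 < N.
  by apply/lt_0_INR/ltP/card_gt0P; exists [ffun _ => [ffun _ => [ffun _ => Ordinal Hn]]].
have T0 : 0 < INR T by apply/lt_0_INR/ltP.
have start : \rsum_(w : Omega n S m b) Fval n fs h (snap_at L gs h x0 w 0) = N * Fx0.
  by rewrite -rsum_const; apply: eq_bigr => w _; rewrite /Fval HFx0.
have final : N * Fstar <= \rsum_(w : Omega n S m b) Fval n fs h (snap_at L gs h x0 w S).
  rewrite -rsum_const; apply: ler_rsum => w; have := Hmin (snap_at L gs h x0 w S).
  by have [c hc] := snap_at_dom gs HL Hproper Hlsc Hconv Hx0 w S; rewrite HFstar /Fval /Fobj hc.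
rewrite expected_sq_grad_map_sum -HTS -/N.
apply: (Rle_trans _ (/ N * (/ INR T * (18 * L * (N * (Fx0 - Fstar)))))); last by right; field; lra.
do 2 (apply: Rmult_le_compat_l; first by apply/Rlt_le/Rinv_0_lt_compat).
apply: Rle_trans descent _; apply: Rmult_le_compat_l; lra.
Qed.
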